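(* Let $h$ be the state on $U_n^{nc}$ defined below. Let $1\le i_1,j_1,\dots,i_r,j_r\le n$ and $\epsilon_1,\dots,\epsilon_r\in\{\emptyset,*\}$. If $\#\{m:\epsilon_m=*\}\ne\#\{m:\epsilon_m=\emptyset\}$, then $h(u^{\epsilon_1}_{i_1j_1}\cdots u^{\epsilon_r}_{i_rj_r})=0$. If $\#\{m:\epsilon_m=*\}=\#\{m:\epsilon_m=\emptyset\}$, then $$h(u^{\epsilon_1}_{i_1j_1}\cdots u^{\epsilon_r}_{i_rj_r})=\prod_{k=-r}^{r}h\Big(\prod^{\rightarrow}_{l\in S_k}u^{\epsilon_l}_{i_lj_l}\Big),$$ where $S_k=\{l\in\{1,\dots,r\}:k=\#\{m>l:\epsilon_m=\emptyset\}-\#\{m\ge l:\epsilon_m=*\}\}$, $\prod^{\rightarrow}$ denotes the product in increasing order of $l$, and an empty product equals $1$ (so $h$ of it is $1$).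
   Context: $U_n^{nc}$ is the universal unital $*$-algebra generated by $u_{ij}$ ($1\le i,j\le n$) with $\sum_ku_{ki}^*u_{kj}=\delta_{ij}=\sum_ku_{ik}u_{jk}^*$; $u^{\emptyset}_{ij}=u_{ij}$. Let $H=\ell^2(\mathbb Z)\otimes\bigotimes_{k\in\mathbb Z}M_n(\mathbb C)$, where $M_n(\mathbb C)$ is a Hilbert space with inner product $\langle A,B\rangle=\mathrm{Tr}(A^*B)/n$ and the infinite tensor product is taken with respect to the reference vector $I_n$; $(\delta_k)$ is the standard basis of $\ell^2(\mathbb Z)$ and $E_{ij}$ the matrix units. Define $U_{ij}(\delta_k\otimes(\cdots\otimes M_{k-1}\otimes M_k\otimes M_{k+1}\otimes\cdots))=\delta_{k+1}\otimes(\cdots\otimes M_{k-1}\otimes E_{ji}M_k\otimes M_{k+1}\otimes\cdots)$, with adjoint $U_{ij}^*(\delta_k\otimes(\cdots\otimes M_{k-1}\otimes\cdots))=\delta_{k-1}\otimes(\cdots\otimes E_{ij}M_{k-1}\otimes M_k\otimes\cdots)$. Let $j:U_n^{nc}\to B(H)$ be the unital $*$-homomorphism with $j(u_{ij})=U_{ij}$, $\Omega=\delta_0\otimes\bigotimes_kI_n$, and $h(a)=\langle\Omega,j(a)\Omega\rangle$. *)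

From HB Require Import structures.
From mathcomp Require Import all_boot all_order all_algebra all_field.
Set Implicit Arguments. Unset Strict Implicit. Unset Printing Implicit Defensive.
Import Order.TTheory GRing.Theory Num.Theory.
Local Open Scope ring_scope.

(* A letter u^{eps}_{ij}: (eps, i, j) with eps = true meaning "*". *)
Definition letter (n : nat) := (bool * 'I_n * 'I_n)%type.

(* Elementary tensors delta_k (x) (x)_l M_l of H; all factors but finitely
   many equal I_n. *)
Definition conf (n : nat) := (int * (int -> 'M[algC]_n))%type.

Definition upd n (f : int -> 'M[algC]_n) (p : int) (M : 'M[algC]_n) :=
  fun q => if q == p then M else f q.

(* Action of U_{ij} (eps = false) and U_{ij}^* (eps = true) on elementary
   tensors. E_{ij} = delta_mx i j. *)
Definition act n (x : letter n) (s : conf n) : conf n :=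
  let: (e, i, j) := x in
  let: (k, f) := s in
  if e then (k - 1, upd f (k - 1) (delta_mx i j *m f (k - 1)))
  else (k + 1, upd f k (delta_mx j i *m f k)).

Definition Omega n : conf n := (0, fun _ => 1%:M).

Definition apply_word n (w : seq (letter n)) : conf n := foldr (@act n) (Omega n) w.

(* h(u^{e1}_{i1j1} ... u^{er}_{irjr}) = <Omega, j(...) Omega>
   = [k = 0] * prod_l <I_n, M_l> with <I_n, M> = Tr(M)/n.
   Only positions in [-r, r] can carry a factor different from I_n
   (whose contribution <I_n,I_n> is 1), so the product is taken there. *)
Definition h n (w : seq (letter n)) : algC :=
  let: (k, f) := apply_word w in
  if k == 0 then
    \prod_(t < (size w).*2.+1) (\tr (f (t%:Z - (size w)%:Z)) / n%:R)
  else 0.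

Definition count_star n (w : seq (letter n)) : nat := count (fun x => x.1.1) w.
Definition count_nostar n (w : seq (letter n)) : nat := count (fun x => ~~ x.1.1) w.

(* S_k (0-based l): k = #{m > l : eps_m = emptyset} - #{m >= l : eps_m = *};
   the subword of w at positions in S_k, in increasing order. *)
Definition Sword n (w : seq (letter n)) (k : int) : seq (letter n) :=
  mask [seq k == ((count_nostar (drop l.+1 w))%:Z - (count_star (drop l w))%:Z)
       | l <- iota 0 (size w)] w.

From HB Require Import structures.
From mathcomp Require Import all_boot all_order all_algebra all_field.
From mathcomp Require Import zify.
Import Order.TTheory GRing.Theory Num.Theory.
Set Implicit Arguments. Unset Strict Implicit. Unset Printing Implicit Defensive.
Local Open Scope ring_scope.

(* Applying a word to Omega performs a walk on Z that starts at 0: each letter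
   moves the marker by one step and multiplies the tensor factor at the site it
   crosses by a matrix unit.  Hence h(w) vanishes unless the walk is closed
   (#* = #emptyset), and then it is the product over the sites of the
   normalized traces of the accumulated factors.  S_k is exactly the set of
   letters acting at site k.  Taken alone, these letters again form a closed
   walk (a closed walk crosses each edge as often in both directions), and
   they accumulate the same factor at a single site, so h(S_k) is the k-th
   normalized trace. *)

Section Walk.

Variable n : nat.
Implicit Types (w : seq (letter n)) (x : letter n).

Definition shift w : int := (count_nostar w)%:Z - (count_star w)%:Z.

(* The site acted on by [x] once [w] has been applied: U_ij acts at the
   current position k, U_ij^* at k - 1. *)
Definition site x w : int := if x.1.1 then shift w - 1 else shift w.

Definition letter_mx x : 'M[algC]_n :=
  let: (e, i, j) := x in if e then delta_mx i j else delta_mx j i.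

Fixpoint site_mx w (q : int) : 'M[algC]_n :=
  if w is x :: w' then
    if site x w' == q then letter_mx x *m site_mx w' q else site_mx w' q
  else 1%:M.

Definition ntr (M : 'M[algC]_n) : algC := \tr M / n%:R.

Lemma shift_cons x w : shift (x :: w) = if x.1.1 then shift w - 1 else shift w + 1.
Proof. by rewrite /shift /count_nostar /count_star /=; case: x.1.1 => /=; lia. Qed.

Lemma apply_wordE w :
  (apply_word w).1 = shift w /\ forall q, (apply_word w).2 q = site_mx w q.
Proof.
elim: w => [|[[e i] j] w [IHk IHf]] //.
rewrite /apply_word /= -/(apply_word w) shift_cons /site.
case: (apply_word w) IHk IHf => k f /= -> IHf.
by case: e => /=; split=> // q; rewrite /upd IHf; case: eqP => [->|]; case: eqP => // ->.
Qed.

Lemma hE w : h w = if shift w == 0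
  then \prod_(t < (size w).*2.+1) ntr (site_mx w (t%:Z - (size w)%:Z)) else 0.
Proof.
rewrite /h; have [] := apply_wordE w.
case: (apply_word w) => k f /= -> Ef.
by case: ifP => // _; apply: eq_bigr => t _; rewrite Ef.
Qed.

Lemma Sword_cons x w k :
  Sword (x :: w) k = if site x w == k then x :: Sword w k else Sword w k.
Proof.
rewrite /Sword /= -[1%N]/(1 + 0)%N iotaDl -map_comp drop0.
have -> : (k == (count_nostar w)%:Z - (x.1.1 + count_star w)%N%:Z) = (site x w == k).
  by rewrite /site /shift; case: x.1.1 => /=; apply/eqP/eqP; lia.
by congr (if _ then _ else _); congr (mask _ _); apply: eq_map.
Qed.

(* Net number of crossings of the edge (k, k + 1) by a walk from 0 to p. *)
Definition crossing (p k : int) : int :=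
  (if k < p then 1 else 0) - (if k < 0 then 1 else 0).

Lemma shift_Sword w k : shift (Sword w k) = crossing (shift w) k.
Proof.
elim: w => [|[[e i] j] w IH]; first by rewrite /crossing /shift /=; repeat case: ifP => ?; lia.
rewrite Sword_cons /site /=; case: e; rewrite /= shift_cons;
  case: eqP => Ek; rewrite ?shift_cons /= IH /crossing; repeat case: ifP => ?; lia.
Qed.

(* The letters of S_k, applied alone, all act at site 0 or all at site -1. *)
Definition base_site (k : int) : int := if k < 0 then -1 else 0.

Lemma site_mx_Sword w k q :
  site_mx (Sword w k) q = if q == base_site k then site_mx w k else 1%:M.
Proof.
elim: w => [|x w IH]; first by case: ifP.
rewrite Sword_cons; case: eqP => Ek /=; last by rewrite IH; move/eqP/negbTE: Ek => ->.
have -> : site x (Sword w k) = base_site k.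
  move: Ek; rewrite /site shift_Sword /crossing /base_site.
  by case: x.1.1 => Ek; repeat case: ifP => ?; lia.
rewrite IH Ek eqxx; case: eqP => [->|]; first by rewrite eqxx.
by move=> /nesym/eqP/negbTE ->.
Qed.

Hypothesis n_gt0 : (0 < n)%N.

Lemma ntr1 : ntr 1%:M = 1.
Proof. by rewrite /ntr mxtrace1 divff // pnatr_eq0 -lt0n. Qed.

Lemma h_nil : h (Nil (letter n)) = 1.
Proof. by rewrite hE /= big_ord1 ntr1. Qed.

Lemma h_single_site w (q0 : int) :
  shift w = 0 -> - (size w)%:Z <= q0 <= (size w)%:Z ->
  (forall q, q != q0 -> site_mx w q = 1%:M) ->
  h w = ntr (site_mx w q0).
Proof.
move=> closed_w /andP[q0_ge q0_le] trivial_off_q0.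
have t0_lt : (absz (q0 + (size w)%:Z)%R < (size w).*2.+1)%N by lia.
rewrite hE closed_w eqxx (bigD1 (Ordinal t0_lt)) //= big1 ?mulr1.
  by congr (ntr (site_mx w _)); lia.
move=> t t_neq; rewrite trivial_off_q0 ?ntr1 //.
by apply: contra t_neq => /eqP q0E; apply/eqP/val_inj => /=; lia.
Qed.

Lemma h_Sword w k : shift w = 0 -> h (Sword w k) = ntr (site_mx w k).
Proof.
move=> closed_w.
have <- : site_mx (Sword w k) (base_site k) = site_mx w k by rewrite site_mx_Sword eqxx.
have [-> | S_nonnil] := eqVneq (Sword w k) [::]; first by rewrite h_nil ntr1.
apply: h_single_site.
- by rewrite shift_Sword closed_w /crossing; case: ifP; lia.
- by move: S_nonnil; rewrite /base_site; case: (Sword w k) => //= ? ? _; case: ifP; lia.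
- by move=> q; rewrite site_mx_Sword => /negbTE ->.
Qed.

End Walk.

Theorem mainTheorem9 (n : nat) (hn : (0 < n)%N) (w : seq (letter n)) :
  (count_star w <> count_nostar w -> h w = 0) /\
  (count_star w = count_nostar w ->
     h w = \prod_(t < (size w).*2.+1) h (Sword w (t%:Z - (size w)%:Z))).
Proof.
split=> counts; rewrite hE.
  by case: eqP => // closed_w; exfalso; apply: counts; move: closed_w; rewrite /shift; lia.
have closed_w : shift w = 0 by rewrite /shift counts subrr.
by rewrite closed_w eqxx; apply: eq_bigr => t _; rewrite (h_Sword hn _ closed_w).
Qed.
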